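(* Let $m\ge1$, let $\phi$ be the unique real root in $(1,2]$ of $\rho^m-\rho^{m-1}-1$, and set $p^-=\frac{\phi-1}{1+m(\phi-1)}$, $p^\bigstar=(m-1)p^-$, $p^+=1-mp^-$. For $\mathbf s\in\{+,-,\bigstar\}^n$ and $x\in\{+,-,\bigstar\}$ let $P^{(x)}_{\mathbf s}=\#\{k: s_k=x\}/n$. Then for every $\epsilon\in(0,1)$, $$\lim_{n\to\infty}\frac{\bigl|\{\mathbf s\in\mathcal S_n:\ |P^{(-)}_{\mathbf s}-p^-|\le\epsilon,\ |P^{(+)}_{\mathbf s}-p^+|\le\epsilon,\ |P^{(\bigstar)}_{\mathbf s}-p^\bigstar|\le\epsilon\}\bigr|}{N(n)}=1 .$$
   Context: Fix an integer $m\ge1$. Define integers $N(n)$ by $N(n)=1$ for $1-m\le n\le 0$ and $N(n)=N(n-1)+N(n-m)$ for $n\ge1$; write $\mathbb N_n=\{1,\dots,N(n)\}$ (so $\mathbb N_n=\{1\}$ for $n\le 0$, and $\mathbb N_{n-m}\subseteq\mathbb N_{n-1}$). Define vectors $\mathbf s_n^{(i)}\in\{+,-,\bigstar\}^n$ for $n\ge0$, $i\in\mathbb N_n$, recursively: $\mathbf s_0^{(1)}$ is the empty vector, and for $n\ge1$: $\mathbf s_n^{(j)}=(\mathbf s_{n-1}^{(j)},+)$ and $\mathbf s_n^{(j+N(n-1))}=(\mathbf s_{n-1}^{(j)},-)$ for $j\in\mathbb N_{n-m}$, while $\mathbf s_n^{(j)}=(\mathbf s_{n-1}^{(j)},\bigstar)$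 for $j\in\mathbb N_{n-1}\setminus\mathbb N_{n-m}$. Let $\mathcal S_n=\{\mathbf s_n^{(i)}:i\in\mathbb N_n\}$ for $n\ge1$. *)

From Stdlib Require Import Reals Lra Lia Arith List.
Import ListNotations.
Inductive sym : Type := Plus | Minus | Star.

Definition sym_eq_dec : forall x y : sym, {x = y} + {x <> y}.
Proof. decide equality. Defined.

Definition symvec_eq_dec : forall u v : list sym, {u = v} + {u <> v} :=
  list_eq_dec sym_eq_dec.

(* Nhist m k = [N(k); N(k-1); ...; N(0)].  Positions beyond the list stand
   for N(j) with j <= 0, i.e. value 1 (default of nth). *)
Fixpoint Nhist (m k : nat) : list nat :=
  match k with
  | O => [1%nat]
  | S k' => let h := Nhist m k' in
            (nth 0 h 1 + nth (m - 1) h 1)%nat :: h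
  end.

(* N(n) for n >= 0 : N(0)=1, N(n) = N(n-1) + N(n-m) with N(j)=1 for j <= 0. *)
Definition Nseq (m n : nat) : nat := nth 0 (Nhist m n) 1.

Definition Nshift (m n : nat) : nat := if (n <=? m)%nat then 1%nat else Nseq m (n - m).

Fixpoint mapi_aux {A B : Type} (f : nat -> A -> B) (i : nat) (l : list A) : list B :=
  match l with
  | [] => []
  | x :: l' => f i x :: mapi_aux f (S i) l'
  end.

(* Svec m n = [s_n^(1); ...; s_n^(N(n))], vectors written as lists of length n,
   (s, x) meaning s with x appended at the end.  Index j (1-based) corresponds
   to list position j-1. *)
Fixpoint Svec (m n : nat) : list (list sym) :=
  match n with
  | O => [ [] ]
  | S k =>
      let prev := Svec m k in
      let a := Nshift m (S k) in
      mapi_aux (fun j s => s ++ [if (j <? a)%nat then Plus else Star]) 0 prev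
      ++ map (fun s => s ++ [Minus]) (firstn a prev)
  end.

Open Scope R_scope.

Definition Pfreq (x : sym) (s : list sym) : R :=
  INR (count_occ sym_eq_dec s x) / INR (length s).

Definition good (pm pp ps eps : R) (s : list sym) : Prop :=
  Rabs (Pfreq Minus s - pm) <= eps /\
  Rabs (Pfreq Plus s - pp) <= eps /\
  Rabs (Pfreq Star s - ps) <= eps.

Definition good_dec (pm pp ps eps : R) (s : list sym) : bool :=
  if Rle_dec (Rabs (Pfreq Minus s - pm)) eps then
  if Rle_dec (Rabs (Pfreq Plus s - pp)) eps then
  if Rle_dec (Rabs (Pfreq Star s - ps)) eps then true else false else false else false.

(* cardinality of the set {s in S_n | good s} : distinct elements counted once *)
Definition count_good (m n : nat) (pm pp ps eps : R) : nat :=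
  length (nodup symvec_eq_dec (filter (good_dec pm pp ps eps) (Svec m n))).

(* Each vector of [S_n] is a word in the blocks [+] and [- *^(m-1)] whose last
   block may be cut short, so its star count is [m - 1] times its minus count up
   to [m - 1], and all three frequencies are governed by the minus frequency.
   The multiset of minus counts satisfies [K(n+1) = K(n) + (K(n+1-m) shifted by
   one)], so the exponential moment [W_u(n) = sum_s exp(u #minus(s))] obeys
   [W_u(n+1) = W_u(n) + e^u W_u(n+1-m)] and grows at most like [r^n] whenever
   [r^(m-1) + e^u <= r^m].  For [r = phi e^(b u)] such a tilt [u] exists on the
   far side of [p^-] for every [b <> p^-], because the derivative of
   [r^m - r^(m-1) - e^u] at [u = 0] is [b (phi^(m-1) + m) - 1 = (b - p^-) / p^-].
   Since [N(n) >= phi^n], Markov's inequality then bounds each tail of the minus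
   frequency by a geometrically small fraction of [N(n)]. *)

From Stdlib Require Import Reals List Lia Lra.
From Coquelicot Require Import Coquelicot.
Import ListNotations.
Open Scope R_scope.

(** * The counting sequence [N] *)

Section CountingSequence.
Local Open Scope nat_scope.

Lemma nth_Nhist m n i : nth i (Nhist m n) 1 = Nseq m (n - i).
Proof.
  revert i; induction n as [|n IH]; intros [|i]; try reflexivity.
  - destruct i; reflexivity.
  - simpl. rewrite IH. reflexivity.
Qed.

Lemma Nseq_S m n : 1 <= m -> Nseq m (S n) = Nseq m n + Nseq m (S n - m).
Proof.
  intros hm. unfold Nseq at 1. simpl. rewrite !nth_Nhist.
  now replace (n - 0) with n by lia; replace (n - (m - 1)) with (S n - m) by lia.
Qed.

Lemma Nseq_mono m a b : 1 <= m -> a <= b -> Nseq m a <= Nseq m b.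
Proof. intros hm H; induction H; [lia|rewrite Nseq_S; lia]. Qed.

Lemma Nseq_pos m n : 1 <= m -> 1 <= Nseq m n.
Proof. intros hm. apply (Nseq_mono m 0 n hm). lia. Qed.

Lemma Nshift_eq m n : Nshift m n = Nseq m (n - m).
Proof.
  unfold Nshift. destruct (Nat.leb_spec n m); [|reflexivity].
  now replace (n - m) with 0 by lia.
Qed.

End CountingSequence.

(** * The vectors [s_n^(i)] *)

Section Vectors.
Local Open Scope nat_scope.

Lemma length_mapi_aux {A B} (f : nat -> A -> B) i l : length (mapi_aux f i l) = length l.
Proof. revert i; induction l; simpl; auto. Qed.

Lemma nth_mapi_aux {A B} (f : nat -> A -> B) i l j d d' :
  j < length l -> nth j (mapi_aux f i l) d = f (i + j) (nth j l d').
Proof.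
  revert i j; induction l as [|x l IH]; intros i [|j] H; simpl in *; try lia.
  - f_equal; lia.
  - rewrite IH by lia. f_equal; lia.
Qed.

Lemma in_mapi_aux {A B} (f : nat -> A -> B) i l y :
  In y (mapi_aux f i l) -> exists k x, In x l /\ y = f k x.
Proof.
  revert i; induction l as [|x l IH]; intros i H; simpl in H; [contradiction|].
  destruct H as [<-|H]; [now exists i, x; split; [left|]|].
  destruct (IH _ H) as (k & z & Hz & ->). exists k, z; split; [right|]; auto.
Qed.

Lemma length_Svec m n : 1 <= m -> length (Svec m n) = Nseq m n.
Proof.
  intros hm; induction n; [reflexivity|].
  simpl. rewrite length_app, length_mapi_aux, length_map, length_firstn, IHn, Nshift_eq,
    (Nseq_S m n hm).
  pose proof (Nseq_mono m (S n - m) n hm ltac:(lia)). lia.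
Qed.

Lemma nth_Svec_old m n j : 1 <= m -> j < Nseq m n ->
  nth j (Svec m (S n)) [] =
  nth j (Svec m n) [] ++ [if j <? Nseq m (S n - m) then Plus else Star].
Proof.
  intros hm hj. simpl. rewrite app_nth1 by (rewrite length_mapi_aux, length_Svec; lia).
  now rewrite (nth_mapi_aux _ _ _ _ _ []), Nshift_eq by (rewrite length_Svec; lia).
Qed.

Lemma nth_Svec_new m n j : 1 <= m -> j < Nseq m (S n - m) ->
  nth (Nseq m n + j) (Svec m (S n)) [] = nth j (Svec m n) [] ++ [Minus].
Proof.
  intros hm hj. pose proof (Nseq_mono m (S n - m) n hm ltac:(lia)).
  simpl. rewrite app_nth2 by (rewrite length_mapi_aux, length_Svec; lia).
  rewrite length_mapi_aux, length_Svec, Nshift_eq by lia.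
  replace (Nseq m n + j - Nseq m n) with j by lia.
  rewrite (nth_indep _ _ ([] ++ [Minus])) by (rewrite length_map, length_firstn, length_Svec; lia).
  change ([] ++ [Minus]) with ((fun s : list sym => s ++ [Minus]) []).
  rewrite map_nth, nth_firstn.
  now destruct (Nat.ltb_spec j (Nseq m (S n - m))); [|lia].
Qed.

Lemma NoDup_Svec m n : NoDup (Svec m n).
Proof.
  induction n as [|n IH]; simpl; [repeat constructor; auto|].
  apply NoDup_app.
  - clear -IH. generalize 0. induction IH as [|s l Hs _ IHl]; intros i; constructor; auto.
    intros (k & z & Hz & E)%in_mapi_aux. apply app_inj_tail in E as [-> _]. contradiction.
  - apply NoDup_map_NoDup_ForallPairs.
    + intros a b _ _ E. now apply app_inj_tail in E.
    + apply (NoDup_app_remove_r _ (skipn (Nshift m (S n)) (Svec m n))).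
      now rewrite firstn_skipn.
  - intros y (k & z & _ & ->)%in_mapi_aux (w & E & _)%in_map_iff.
    apply app_inj_tail in E as [_ E]. destruct (k <? Nshift m (S n)); discriminate.
Qed.

End Vectors.

(** * Stars owed after each minus *)

Section Owed.
Local Open Scope nat_scope.

(* [owed m s] is the number of stars still missing from the last block [- *^(m-1)]. *)
Definition owed_step (m p : nat) (x : sym) : nat :=
  match x with Minus => m - 1 | Star => p - 1 | Plus => p end.

Definition owed (m : nat) (s : list sym) : nat := fold_left (owed_step m) s 0.

Lemma owed_snoc m s x : owed m (s ++ [x]) = owed_step m (owed m s) x.
Proof. unfold owed. now rewrite fold_left_app. Qed.

Definition cnt (x : sym) (s : list sym) : nat := count_occ sym_eq_dec s x.

Lemma cnt_snoc_same x s : cnt x (s ++ [x]) = S (cnt x s).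
Proof. unfold cnt. rewrite count_occ_app. simpl. destruct sym_eq_dec; [lia|congruence]. Qed.

Lemma cnt_snoc_other x y s : y <> x -> cnt x (s ++ [y]) = cnt x s.
Proof. intros. unfold cnt. rewrite count_occ_app. simpl. destruct sym_eq_dec; [congruence|lia]. Qed.

Lemma cnt_total s : cnt Plus s + cnt Minus s + cnt Star s = length s.
Proof. induction s as [|[] s IH]; unfold cnt in *; simpl; lia. Qed.

Lemma owed_invariant m n j : 1 <= m -> j < Nseq m n ->
  let s := nth j (Svec m n) [] in
  (forall r, owed m s <= r <-> j < Nseq m (n + 1 + r - m)) /\
  cnt Star s + owed m s = (m - 1) * cnt Minus s /\ length s = n.
Proof.
  intros hm. revert j. induction n as [|n IH]; intros j hj s.
  - unfold Nseq in hj; simpl in hj. subst s. destruct j; [|lia].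
    split; [|cbn; lia]. intros r.
    pose proof (Nseq_pos m (0 + 1 + r - m) hm). unfold owed; simpl fold_left. lia.
  - rewrite Nseq_S in hj by lia. subst s.
    destruct (Nat.lt_ge_cases j (Nseq m n)) as [Hold|Hnew].
    + rewrite nth_Svec_old by lia. destruct (IH j Hold) as (H1 & H2 & H3).
      set (s0 := nth j (Svec m n) []) in *.
      rewrite owed_snoc, length_app, H3.
      assert (H0 := H1 0). replace (n + 1 + 0 - m) with (S n - m) in H0 by lia.
      destruct (Nat.ltb_spec j (Nseq m (S n - m))) as [E|E];
        rewrite ?cnt_snoc_same, ?cnt_snoc_other by discriminate; simpl owed_step.
      * assert (owed m s0 <= 0) by (apply H0; lia).
        split; [|split; simpl; lia]. intros r.
        pose proof (Nseq_mono m (S n - m) (S n + 1 + r - m) hm ltac:(lia)). lia.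
      * assert (~ owed m s0 <= 0) by (rewrite H0; lia).
        split; [|split; simpl; lia]. intros r.
        replace (S n + 1 + r - m) with (n + 1 + S r - m) by lia.
        rewrite <- (H1 (S r)). lia.
    + pose proof (Nseq_mono m (S n - m) n hm ltac:(lia)).
      destruct (IH (j - Nseq m n)) as (H1 & H2 & H3); [lia|].
      replace j with (Nseq m n + (j - Nseq m n)) by lia.
      rewrite nth_Svec_new by lia.
      set (s0 := nth (j - Nseq m n) (Svec m n) []) in *.
      rewrite owed_snoc, length_app, H3, cnt_snoc_same, !cnt_snoc_other by discriminate.
      simpl owed_step.
      assert (H0 := H1 0). replace (n + 1 + 0 - m) with (S n - m) in H0 by lia.
      assert (owed m s0 <= 0) by (apply H0; lia).
      split; [|split; simpl; lia]. intros r. destruct (Nat.le_gt_cases (m - 1) r).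
      * pose proof (Nseq_mono m (S n) (S n + 1 + r - m) hm ltac:(lia)).
        rewrite Nseq_S in * by lia. lia.
      * pose proof (Nseq_mono m (S n + 1 + r - m) n hm ltac:(lia)). lia.
Qed.

Lemma in_Svec_counts m n s : 1 <= m -> In s (Svec m n) ->
  length s = n /\ cnt Star s <= (m - 1) * cnt Minus s <= cnt Star s + (m - 1).
Proof.
  intros hm (j & Hj & <-)%(In_nth _ _ []). rewrite length_Svec in Hj by lia.
  destruct (owed_invariant m n j hm Hj) as (H1 & H2 & H3).
  assert (owed m (nth j (Svec m n) []) <= m - 1)
    by (apply H1; now replace (n + 1 + (m - 1) - m) with n by lia).
  split; [assumption|lia].
Qed.

End Owed.

(** * Frequencies *)

Lemma good_dec_spec pm pp ps eps s : good_dec pm pp ps eps s = true <-> good pm pp ps eps s.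
Proof.
  unfold good_dec, good.
  repeat destruct Rle_dec; intuition (try discriminate; try contradiction).
Qed.

Lemma good_of_minus_freq_close m eps d pm s : (1 <= m)%nat -> (0 < length s)%nat ->
  (cnt Star s <= (m - 1) * cnt Minus s <= cnt Star s + (m - 1))%nat ->
  INR m * d <= eps / 2 -> INR (m - 1) / INR (length s) <= eps / 2 ->
  Rabs (Pfreq Minus s - pm) <= d ->
  good pm (1 - INR m * pm) ((INR m - 1) * pm) eps s.
Proof.
  intros hm hn [Hlo Hhi] Hd Hn Hclose.
  pose proof (cnt_total s) as Htot.
  unfold good, Pfreq in *. fold (cnt Minus s) (cnt Plus s) (cnt Star s) in *.
  set (n := length s) in *.
  assert (Hn0 : 0 < INR n) by (apply lt_0_INR; lia).
  assert (Hm : 1 <= INR m) by (apply (le_INR 1); lia).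
  apply le_INR in Hlo, Hhi. apply (f_equal INR) in Htot.
  rewrite mult_INR in Hlo, Hhi. rewrite plus_INR in Hhi. rewrite !plus_INR in Htot.
  rewrite minus_INR in Hlo, Hhi, Hn by lia. simpl INR in Hlo, Hhi, Hn.
  set (X := INR (cnt Minus s)) in *. set (Y := INR (cnt Star s)) in *.
  set (Z := INR (cnt Plus s)) in *.
  set (x := X / INR n - pm). set (e := ((INR m - 1) * X - Y) / INR n).
  assert (Hx : - d <= x <= d) by now apply Rabs_le_between.
  assert (He : 0 <= e <= eps / 2).
  { split; unfold e.
    - apply Rdiv_le_0_compat; lra.
    - apply Rle_trans with ((INR m - 1) / INR n); [|assumption].
      apply Rmult_le_compat_r; [left; apply Rinv_0_lt_compat|]; lra. }
  assert (EY : Y / INR n - (INR m - 1) * pm = (INR m - 1) * x - e)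
    by (unfold x, e; field; lra).
  assert (EZ : Z / INR n - (1 - INR m * pm) = - (INR m * x) + e)
    by (unfold x, e; replace Z with (INR n - X - Y) by lra; field; lra).
  assert (0 <= (INR m - 1) * (d - x)) by (apply Rmult_le_pos; lra).
  assert (0 <= (INR m - 1) * (d + x)) by (apply Rmult_le_pos; lra).
  rewrite EY, EZ. repeat split; apply Rabs_le; nra.
Qed.

Lemma minus_count_far_of_not_good m n eps d pm s : (1 <= m)%nat -> (0 < n)%nat ->
  In s (Svec m n) -> INR m * d <= eps / 2 -> INR (m - 1) / INR n <= eps / 2 ->
  good_dec pm (1 - INR m * pm) ((INR m - 1) * pm) eps s = false ->
  (pm + d) * INR n <= INR (cnt Minus s) \/ INR (cnt Minus s) <= (pm - d) * INR n.
Proof.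
  intros hm hn Hin Hd Hn Hbad.
  destruct (in_Svec_counts m n s hm Hin) as [Hlen Hcnt].
  assert (Hn0 : 0 < INR n) by (apply lt_0_INR; lia).
  destruct (Rle_dec ((pm + d) * INR n) (INR (cnt Minus s))) as [|Hhi]; [now left|].
  destruct (Rle_dec (INR (cnt Minus s)) ((pm - d) * INR n)) as [|Hlo]; [now right|].
  exfalso. apply Bool.not_true_iff_false in Hbad. apply Hbad, good_dec_spec.
  apply good_of_minus_freq_close with d; rewrite ?Hlen; try assumption.
  unfold Pfreq. fold (cnt Minus s). rewrite Hlen.
  assert (0 < / INR n) by now apply Rinv_0_lt_compat.
  replace (INR (cnt Minus s) / INR n - pm)
    with ((INR (cnt Minus s) - pm * INR n) * / INR n) by (field; lra).
  replace d with (d * INR n * / INR n) by (field; lra).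
  apply Rabs_le. rewrite Ropp_mult_distr_l.
  split; apply Rmult_le_compat_r; lra.
Qed.

Lemma length_le_filter_cover {A} (p q1 q2 : A -> bool) l :
  (forall x, In x l -> p x = false -> q1 x = true \/ q2 x = true) ->
  (length l <= length (filter p l) + length (filter q1 l) + length (filter q2 l))%nat.
Proof.
  induction l as [|x l IH]; intros H; simpl; [lia|].
  specialize (IH (fun y Hy => H y (or_intror Hy))).
  destruct (p x) eqn:E1; destruct (q1 x) eqn:E2; destruct (q2 x) eqn:E3; simpl; try lia.
  destruct (H x (or_introl eq_refl) E1); congruence.
Qed.

Lemma count_good_eq m n pm pp ps eps :
  count_good m n pm pp ps eps = length (filter (good_dec pm pp ps eps) (Svec m n)).
Proof. unfold count_good. now rewrite nodup_fixed_point by apply NoDup_filter, NoDup_Svec. Qed.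

Lemma count_good_le m n pm pp ps eps : (1 <= m)%nat ->
  (count_good m n pm pp ps eps <= Nseq m n)%nat.
Proof. intros hm. rewrite count_good_eq, <- length_Svec by assumption. apply filter_length_le. Qed.

(** * The exponential moment of the number of minuses *)

Definition minus_counts (m n : nat) : list nat := map (cnt Minus) (Svec m n).

Lemma map_cnt_Minus_snoc (g : nat -> sym) i l : (forall j, g j <> Minus) ->
  map (cnt Minus) (mapi_aux (fun j s => s ++ [g j]) i l) = map (cnt Minus) l.
Proof.
  intros Hg. revert i; induction l as [|x l IH]; intros i; simpl; [reflexivity|].
  now rewrite cnt_snoc_other, IH by apply Hg.
Qed.

Lemma map_cnt_Minus_Svec_succ m n :
  map (cnt Minus) (mapi_aux (fun j s => s ++ [if (j <? Nshift m (S n))%nat then Plus else Star])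
    0 (Svec m n)) = minus_counts m n.
Proof. apply map_cnt_Minus_snoc. intros j. now destruct (j <? _)%nat. Qed.

(* The first [N(k)] vectors of [S_n] extend those of [S_k] by pluses and stars. *)
Lemma minus_counts_prefix m k n : (1 <= m)%nat -> (k <= n)%nat ->
  map (cnt Minus) (firstn (Nseq m k) (Svec m n)) = minus_counts m k.
Proof.
  intros hm H. induction H as [|n H IH].
  - now rewrite <- (length_Svec m k hm), firstn_all.
  - simpl. rewrite firstn_app, length_mapi_aux, length_Svec by lia.
    replace (Nseq m k - Nseq m n)%nat with 0%nat by (pose proof (Nseq_mono m k n hm H); lia).
    now rewrite app_nil_r, <- IH, <- !firstn_map, map_cnt_Minus_Svec_succ.
Qed.

Lemma minus_counts_S m n : (1 <= m)%nat ->
  minus_counts m (S n) = minus_counts m n ++ map S (minus_counts m (S n - m)).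
Proof.
  intros hm. unfold minus_counts at 1. simpl.
  rewrite map_app, map_cnt_Minus_Svec_succ, map_map. f_equal.
  rewrite (map_ext _ (fun s => S (cnt Minus s))) by (intros; apply cnt_snoc_same).
  now rewrite <- map_map, Nshift_eq, minus_counts_prefix by lia.
Qed.

Definition exp_moment (u : R) (L : list nat) : R :=
  fold_right (fun k acc => exp (u * INR k) + acc) 0 L.

Lemma exp_moment_app u a b : exp_moment u (a ++ b) = exp_moment u a + exp_moment u b.
Proof. induction a; simpl; lra. Qed.

Lemma exp_moment_map_S u a : exp_moment u (map S a) = exp u * exp_moment u a.
Proof.
  induction a as [|a l IH]; [simpl; lra|].
  change (exp (u * INR (S a)) + exp_moment u (map S l) =
          exp u * (exp (u * INR a) + exp_moment u l)).
  rewrite IH, S_INR, Rmult_plus_distr_l, Rmult_1_r, exp_plus. lra.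
Qed.

Lemma exp_moment_nonneg u a : 0 <= exp_moment u a.
Proof. induction a; simpl; [lra|]. pose proof (exp_pos (u * INR a)). lra. Qed.

Lemma length_filter_le_exp_moment (q : nat -> bool) u c (L : list nat) : 0 <= c ->
  (forall k, q k = true -> 1 <= exp (u * INR k) * c) ->
  INR (length (filter q L)) <= c * exp_moment u L.
Proof.
  intros Hc Hq. induction L as [|k L IH]; simpl; [lra|].
  pose proof (exp_pos (u * INR k)).
  destruct (q k) eqn:E; [simpl length; rewrite S_INR; specialize (Hq _ E)|]; nra.
Qed.

Section MinusMoment.
Variables (m : nat) (u : R).
Hypothesis hm : (1 <= m)%nat.

Definition minus_moment (n : nat) : R := exp_moment u (minus_counts m n).

Lemma minus_moment_0 : minus_moment 0 = 1.
Proof. unfold minus_moment, minus_counts. cbn. rewrite Rmult_0_r, exp_0. lra. Qed.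

Lemma minus_moment_S n : minus_moment (S n) = minus_moment n + exp u * minus_moment (S n - m).
Proof. unfold minus_moment. now rewrite minus_counts_S, exp_moment_app, exp_moment_map_S. Qed.

Lemma minus_moment_mono a b : (a <= b)%nat -> minus_moment a <= minus_moment b.
Proof.
  intros H. induction H as [|b H IH]; [lra|]. rewrite minus_moment_S.
  pose proof (exp_pos u). pose proof (exp_moment_nonneg u (minus_counts m (S b - m))).
  unfold minus_moment in *. nra.
Qed.

Lemma minus_moment_le_pow n : minus_moment n <= (1 + exp u) ^ n.
Proof.
  induction n; [rewrite minus_moment_0; simpl; lra|].
  rewrite minus_moment_S. pose proof (minus_moment_mono (S n - m) n ltac:(lia)).
  assert (0 <= exp u * ((1 + exp u) ^ n - minus_moment (S n - m)))
    by (apply Rmult_le_pos; [pose proof (exp_pos u)|]; lra).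
  change ((1 + exp u) ^ S n) with ((1 + exp u) * (1 + exp u) ^ n). lra.
Qed.

Lemma minus_moment_le_geom r : 0 < r -> r ^ (m - 1) + exp u <= r ^ m ->
  forall n, minus_moment n <= (1 + exp u) ^ m * r ^ n.
Proof.
  intros hr hrm.
  assert (hr1 : 1 <= r).
  { assert (E : r ^ m = r * r ^ (m - 1)) by (now replace m with (S (m - 1)) at 1 by lia).
    pose proof (pow_lt r (m - 1) hr). pose proof (exp_pos u). nra. }
  assert (HC : 1 <= (1 + exp u) ^ m) by (apply pow_R1_Rle; pose proof (exp_pos u); lra).
  intros n. induction n as [n IH] using (well_founded_induction Wf_nat.lt_wf).
  destruct n as [|n]; [rewrite minus_moment_0; simpl; lra|].
  destruct (Nat.lt_ge_cases (S n) m).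
  - apply Rle_trans with ((1 + exp u) ^ m); [|pose proof (pow_R1_Rle r (S n) hr1); nra].
    apply Rle_trans with ((1 + exp u) ^ S n); [apply minus_moment_le_pow|].
    apply Rle_pow; [pose proof (exp_pos u); lra|lia].
  - rewrite minus_moment_S.
    pose proof (IH n ltac:(lia)). pose proof (IH (S n - m)%nat ltac:(lia)).
    assert (E1 : r ^ n = r ^ (S n - m) * r ^ (m - 1)) by (rewrite <- pow_add; f_equal; lia).
    assert (E2 : r ^ S n = r ^ (S n - m) * r ^ m) by (rewrite <- pow_add; f_equal; lia).
    assert (0 < r ^ (S n - m)) by (apply pow_lt; lra).
    pose proof (exp_pos u).
    apply Rle_trans with ((1 + exp u) ^ m * (r ^ n + exp u * r ^ (S n - m))); [nra|].
    rewrite E1, E2. apply Rmult_le_compat_l; [lra|]. nra.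
Qed.

End MinusMoment.

Lemma exp_mult_INR x n : exp (x * INR n) = exp x ^ n.
Proof.
  induction n as [|n IH]; [simpl; now rewrite Rmult_0_r, exp_0|].
  now rewrite S_INR, Rmult_plus_distr_l, Rmult_1_r, exp_plus, IH, Rmult_comm.
Qed.

(** * Tails of the minus frequency *)

Lemma derivative_sign_witness (g : R -> R) (l : R) :
  g 0 = 0 -> derivable_pt_lim g 0 l -> l <> 0 -> exists u, 0 < u * l /\ 0 < g u.
Proof.
  intros g0 Hg Hl.
  assert (Hla : 0 < Rabs l / 2) by (pose proof (Rabs_pos_lt l Hl); lra).
  destruct (Hg _ Hla) as [[d Hd] Hdg]; simpl in Hdg.
  set (u := if Rlt_dec 0 l then d / 2 else - (d / 2)).
  assert (Hu : u <> 0 /\ Rabs u < d /\ 0 < u * l).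
  { unfold u. destruct Rlt_dec.
    - rewrite Rabs_pos_eq by lra. repeat split; try lra. nra.
    - rewrite Rabs_Ropp, Rabs_pos_eq by lra. repeat split; try lra. nra. }
  destruct Hu as (Hu0 & Hud & Hul). exists u. split; [assumption|].
  specialize (Hdg u Hu0 Hud). rewrite Rplus_0_l, g0, Rminus_0_r in Hdg.
  replace (g u) with (u * (g u / u)) by (field; assumption).
  apply Rabs_def2 in Hdg. destruct (Rlt_dec 0 l).
  - rewrite Rabs_pos_eq in Hdg by lra. assert (0 < u) by nra. nra.
  - rewrite Rabs_left1 in Hdg by lra. assert (u < 0) by nra. nra.
Qed.

(* For [u > 0] this selects [k >= a n], for [u < 0] it selects [k <= a n]. *)
Definition minus_tail (u a : R) (n : nat) (k : nat) : bool :=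
  if Rle_dec 0 (u * (INR k - a * INR n)) then true else false.

Lemma Nseq_le_count_good_add_tails m n eps d pm u1 u2 :
  (1 <= m)%nat -> (0 < n)%nat -> 0 < u1 -> u2 < 0 ->
  INR m * d <= eps / 2 -> INR (m - 1) / INR n <= eps / 2 ->
  (Nseq m n <= count_good m n pm (1 - INR m * pm) ((INR m - 1) * pm) eps
     + length (filter (fun s => minus_tail u1 (pm + d) n (cnt Minus s)) (Svec m n))
     + length (filter (fun s => minus_tail u2 (pm - d) n (cnt Minus s)) (Svec m n)))%nat.
Proof.
  intros hm hn Hu1 Hu2 Hd Hn.
  rewrite count_good_eq, <- length_Svec by assumption.
  apply length_le_filter_cover. intros s Hin Hbad. unfold minus_tail.
  destruct (minus_count_far_of_not_good m n eps d pm s hm hn Hin Hd Hn Hbad) as [Hfar|Hfar];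
    [left|right]; destruct Rle_dec as [|Hnot]; try reflexivity; exfalso; apply Hnot; nra.
Qed.

Section Concentration.
Variables (m : nat) (phi : R).
Hypothesis hm : (1 <= m)%nat.
Hypothesis hphi : 1 < phi.
Hypothesis hroot : phi ^ m = phi ^ (m - 1) + 1.

Let pm := (phi - 1) / (1 + INR m * (phi - 1)).

Lemma Nseq_ge_pow n : phi ^ n <= INR (Nseq m n).
Proof.
  induction n as [n IH] using (well_founded_induction Wf_nat.lt_wf).
  destruct n as [|n]; [unfold Nseq; simpl; lra|].
  rewrite Nseq_S, plus_INR by lia.
  pose proof (IH n ltac:(lia)) as IHn.
  destruct (Nat.le_gt_cases m (S n)).
  - pose proof (IH (S n - m)%nat ltac:(lia)) as IHm.
    assert (E1 : phi ^ n = phi ^ (S n - m) * phi ^ (m - 1))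
      by (rewrite <- pow_add; f_equal; lia).
    assert (E2 : phi ^ S n = phi ^ (S n - m) * phi ^ m)
      by (rewrite <- pow_add; f_equal; lia).
    rewrite E2, hroot. lra.
  - replace (S n - m)%nat with 0%nat by lia. unfold Nseq at 2; simpl.
    assert (phi ^ n <= phi ^ (m - 1)) by (apply Rle_pow; lia || lra).
    assert (phi ^ m = phi * phi ^ (m - 1)) by (now replace m with (S (m - 1)) at 1 by lia).
    assert (0 <= (phi ^ (m - 1) - phi ^ n) * (phi - 1)) by (apply Rmult_le_pos; lra).
    simpl. nra.
Qed.

Lemma tilted_supersolution b : b * (phi ^ (m - 1) + INR m) <> 1 ->
  exists u, 0 < u * (b * (phi ^ (m - 1) + INR m) - 1) /\
    (phi * exp (b * u)) ^ (m - 1) + exp u <= (phi * exp (b * u)) ^ m.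
Proof.
  intros hb.
  set (g := fun u => (phi * exp (b * u)) ^ m - (phi * exp (b * u)) ^ (m - 1) - exp u).
  assert (Hg : derivable_pt_lim g 0 (b * (phi ^ (m - 1) + INR m) - 1)).
  { apply is_derive_Reals. unfold g. auto_derive; [exact I|].
    rewrite Rmult_0_r, exp_0, !Rmult_1_r.
    destruct m as [|k]; [lia|]. replace (S k - 1)%nat with k in * by lia.
    simpl pred. rewrite S_INR.
    assert (Epred : INR k * (phi * phi ^ pred k) = INR k * phi ^ k) by (destruct k; simpl; ring).
    assert (Eroot : phi * phi ^ k = phi ^ k + 1) by exact hroot.
    transitivity (b * (INR k + 1) * (phi * phi ^ k) - b * (INR k * (phi * phi ^ pred k)) - 1);
      [ring|].
    rewrite Epred, Eroot. ring. }
  assert (g0 : g 0 = 0) by (unfold g; rewrite Rmult_0_r, exp_0, Rmult_1_r, hroot; ring).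
  destruct (derivative_sign_witness g _ g0 Hg) as (u & Hu & Hgu); [intro; apply hb; lra|].
  exists u. split; [assumption|]. unfold g in Hgu. lra.
Qed.

Lemma minus_tail_count u a b n :
  (phi * exp (b * u)) ^ (m - 1) + exp u <= (phi * exp (b * u)) ^ m ->
  INR (length (filter (fun s => minus_tail u a n (cnt Minus s)) (Svec m n))) <=
  (1 + exp u) ^ m * exp (u * (b - a)) ^ n * INR (Nseq m n).
Proof.
  intros Hsuper.
  rewrite <- (length_map (cnt Minus)), <- filter_map_swap.
  eapply Rle_trans.
  { apply (length_filter_le_exp_moment _ u (exp (- u * a) ^ n)); [left; apply pow_lt, exp_pos|].
    intros k. unfold minus_tail. destruct Rle_dec as [Hk|]; [intros _|discriminate].
    rewrite <- exp_mult_INR, <- exp_plus.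
    pose proof (exp_ineq1_le (u * INR k + - u * a * INR n)). nra. }
  fold (minus_counts m n) (minus_moment m u n).
  pose proof (minus_moment_le_geom m u hm (phi * exp (b * u))
    ltac:(pose proof (exp_pos (b * u)); nra) Hsuper n) as Hmom.
  pose proof (Nseq_ge_pow n) as HN.
  assert (E : exp (- u * a) ^ n * (phi * exp (b * u)) ^ n = exp (u * (b - a)) ^ n * phi ^ n).
  { rewrite <- !Rpow_mult_distr. f_equal.
    replace (u * (b - a)) with (- u * a + b * u) by ring. rewrite exp_plus. ring. }
  assert (0 < exp (- u * a) ^ n) by apply pow_lt, exp_pos.
  assert (0 < exp (u * (b - a)) ^ n) by apply pow_lt, exp_pos.
  assert (0 < (1 + exp u) ^ m) by (apply pow_lt; pose proof (exp_pos u); lra).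
  apply Rle_trans with (exp (- u * a) ^ n * ((1 + exp u) ^ m * (phi * exp (b * u)) ^ n));
    [apply Rmult_le_compat_l; lra|].
  replace (exp (- u * a) ^ n * ((1 + exp u) ^ m * (phi * exp (b * u)) ^ n))
    with ((1 + exp u) ^ m * exp (u * (b - a)) ^ n * phi ^ n) by (rewrite Rmult_assoc, <- E; ring).
  apply Rmult_le_compat_l; [|assumption]. apply Rmult_le_pos; lra.
Qed.

Lemma pm_eq : pm = 1 / (phi ^ (m - 1) + INR m).
Proof.
  assert (E : phi ^ (m - 1) * (phi - 1) = 1).
  { assert (phi ^ m = phi * phi ^ (m - 1)) by (now replace m with (S (m - 1)) at 1 by lia).
    lra. }
  assert (0 < phi ^ (m - 1)) by (apply pow_lt; lra).
  assert (0 <= INR m) by apply pos_INR.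
  unfold pm. field_simplify_eq; [lra|nra].
Qed.

Lemma minus_tail_decay a : a <> pm -> exists u C t, 0 < u * (a - pm) /\ Rabs t < 1 /\
  forall n, INR (length (filter (fun s => minus_tail u a n (cnt Minus s)) (Svec m n))) <=
            C * t ^ n * INR (Nseq m n).
Proof.
  intros Ha.
  set (D := phi ^ (m - 1) + INR m).
  assert (HD : 0 < D).
  { pose proof (pow_lt phi (m - 1) ltac:(lra)). pose proof (pos_INR m). unfold D. lra. }
  set (b := (a + pm) / 2).
  assert (Eb : b * D - 1 = (a - pm) / 2 * D) by (unfold b; rewrite pm_eq; fold D; field; lra).
  destruct (tilted_supersolution b) as (u & Hu & Hsuper).
  { fold D. intros H. apply Ha. assert (H0 : (a - pm) / 2 * D = 0) by lra.
    apply Rmult_integral in H0 as [|]; lra. }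
  fold D in Hu. rewrite Eb in Hu.
  assert (Hua : 0 < u * (a - pm)) by nra.
  exists u, ((1 + exp u) ^ m), (exp (u * (b - a))). repeat split; [assumption| |].
  - rewrite Rabs_pos_eq by (left; apply exp_pos). rewrite <- exp_0. apply exp_increasing.
    unfold b. nra.
  - intros n. apply (minus_tail_count u a b n Hsuper).
Qed.

Lemma count_good_lower eps : 0 < eps -> exists C1 C2 t1 t2 N0,
  Rabs t1 < 1 /\ Rabs t2 < 1 /\ forall n, (N0 <= n)%nat ->
  1 - C1 * t1 ^ n - C2 * t2 ^ n <=
  INR (count_good m n pm (1 - INR m * pm) ((INR m - 1) * pm) eps) / INR (Nseq m n).
Proof.
  intros heps.
  assert (Hm : 1 <= INR m) by (apply (le_INR 1); lia).
  set (d := eps / (2 * INR m)).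
  assert (Hd0 : 0 < d) by (apply Rdiv_lt_0_compat; lra).
  assert (Hd : INR m * d <= eps / 2) by (right; unfold d; field; lra).
  destruct (minus_tail_decay (pm + d)) as (u1 & C1 & t1 & Hu1 & Ht1 & T1); [lra|].
  destruct (minus_tail_decay (pm - d)) as (u2 & C2 & t2 & Hu2 & Ht2 & T2); [lra|].
  assert (Hu1pos : 0 < u1) by nra. assert (Hu2neg : u2 < 0) by nra.
  destruct (archimed_cor1 d Hd0) as (N0 & HN0 & HN0pos).
  exists C1, C2, t1, t2, N0. split; [assumption|split; [assumption|]]. intros n Hn.
  assert (Hn0 : 0 < INR n) by (apply lt_0_INR; lia).
  assert (Hn_eps : INR (m - 1) / INR n <= eps / 2).
  { rewrite minus_INR by assumption. simpl INR.
    assert (/ INR n <= / INR N0) by (apply Rinv_le_contravar; [apply lt_0_INR|apply le_INR]; lia).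
    assert (0 < / INR n) by now apply Rinv_0_lt_compat.
    apply Rle_trans with (INR m * / INR N0); [unfold Rdiv|]; nra. }
  pose proof (Nseq_le_count_good_add_tails m n eps d pm u1 u2 hm ltac:(lia)
    Hu1pos Hu2neg Hd Hn_eps) as Hcover.
  apply le_INR in Hcover. rewrite !plus_INR in Hcover.
  specialize (T1 n). specialize (T2 n).
  pose proof (Nseq_pos m n hm) as HN. apply (le_INR 1) in HN. simpl INR in HN.
  replace (1 - C1 * t1 ^ n - C2 * t2 ^ n)
    with ((INR (Nseq m n) - C1 * t1 ^ n * INR (Nseq m n) - C2 * t2 ^ n * INR (Nseq m n))
          / INR (Nseq m n)) by (field; lra).
  unfold Rdiv. apply Rmult_le_compat_r; [left; apply Rinv_0_lt_compat|]; lra.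
Qed.

End Concentration.

Lemma Un_cv_squeeze_geom (x : nat -> R) C1 C2 t1 t2 N0 :
  Rabs t1 < 1 -> Rabs t2 < 1 ->
  (forall n, (N0 <= n)%nat -> 1 - C1 * t1 ^ n - C2 * t2 ^ n <= x n <= 1) -> Un_cv x 1.
Proof.
  intros H1 H2 Hx. apply is_lim_seq_Reals.
  apply (is_lim_seq_le_le_loc (fun n => 1 - C1 * t1 ^ n - C2 * t2 ^ n) _ (fun _ => 1)).
  - exists N0. exact Hx.
  - replace (Finite 1) with (Finite (1 - C1 * 0 - C2 * 0)) by (f_equal; ring).
    apply is_lim_seq_minus'; [apply is_lim_seq_minus'; [apply is_lim_seq_const|]|].
    + exact (is_lim_seq_scal_l _ C1 0 (is_lim_seq_geom _ H1)).
    + exact (is_lim_seq_scal_l _ C2 0 (is_lim_seq_geom _ H2)).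
  - apply is_lim_seq_const.
Qed.

Theorem theorem2 (m : nat) (hm : (1 <= m)%nat) (phi : R)
  (hphi1 : 1 < phi) (hphi2 : phi <= 2)
  (hroot : phi ^ m - phi ^ (m - 1) - 1 = 0)
  (eps : R) (heps0 : 0 < eps) (heps1 : eps < 1) :
  let pm := (phi - 1) / (1 + INR m * (phi - 1)) in
  let ps := (INR m - 1) * pm in
  let pp := 1 - INR m * pm in
  Un_cv (fun n => INR (count_good m n pm pp ps eps) / INR (Nseq m n)) 1.
Proof.
  intros pm ps pp.
  destruct (count_good_lower m phi hm hphi1 ltac:(lra) eps heps0)
    as (C1 & C2 & t1 & t2 & N0 & Ht1 & Ht2 & Hlow).
  apply (Un_cv_squeeze_geom _ C1 C2 t1 t2 N0 Ht1 Ht2). intros n Hn. split.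
  - exact (Hlow n Hn).
  - pose proof (count_good_le m n pm pp ps eps hm) as Hle. apply le_INR in Hle.
    pose proof (Nseq_pos m n hm) as HN. apply (le_INR 1) in HN. simpl INR in HN.
    apply Rle_div_l; lra.
Qed.
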